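(* Let $k$ be a perfect field of characteristic $p>0$, $R=k[x_1,\ldots,x_n]$, and let $A=R/(f_1,\ldots,f_m)$. Let $\widetilde f_1,\ldots,\widetilde f_m\in\widetilde R=W_2(k)[x_1,\ldots,x_n]$ be lifts of $f_1,\ldots,f_m$ such that $B=\widetilde R/(\widetilde f_1,\ldots,\widetilde f_m)$ is flat over $W_2(k)$ (so $B$ is a $W_2(k)$-lifting of $A$). Then there exists a ring endomorphism of $B$ lying over the Frobenius $\sigma$ of $W_2(k)$ and reducing to the $p$-th power map of $A$ if and only if there exist $h_1,\ldots,h_n\in R$ such that for every $i\in\{1,\ldots,m\}$ $$P(\widetilde f_i)\equiv\sum_{k=1}^n\Big(\frac{\partial f_i}{\partial x_k}\Big)^ph_k\pmod{(f_1,\ldots,f_m)}.$$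
   Context: $W_2(k)$ is the ring of length-$2$ Witt vectors with Frobenius $\sigma(a_0,a_1)=(a_0^p,a_1^p)$. Let $\widetilde F:\widetilde R\to\widetilde R$ be $\sum_Ia_Ix^I\mapsto\sum_I\sigma(a_I)x^{pI}$ (multi-index notation). For $\widetilde f\in\widetilde R$ the element $\widetilde F(\widetilde f)-\widetilde f^p$ lies in $p\widetilde R$, and since multiplication by $p$ induces an isomorphism $R=\widetilde R/p\widetilde R\cong p\widetilde R$, there is a unique $P(\widetilde f)\in R$ with $pP(\widetilde f)=\widetilde F(\widetilde f)-\widetilde f^p$. *)

From HB Require Import structures.
From mathcomp Require Import all_boot all_order all_algebra.
From mathcomp Require Import mpoly.
From Stdlib Require Import ClassicalEpsilon.

Set Implicit Arguments. Unset Strict Implicit. Unset Printing Implicit Defensive.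
Import GRing.Theory.
Local Open Scope ring_scope.

Definition in_ideal (T : comNzRingType) (m : nat) (g : 'I_m -> T) (x : T) : Prop :=
  exists c : 'I_m -> T, x = \sum_(j < m) c j * g j.

(* A (commutative) ring W playing the role of W_2(k): a W_2(k)-type ring,
   i.e. a ring W with a surjective ring map pi : W -> k such that
   ker pi = p W and multiplication by p induces an iso k = W/pW ~ pW
   (i.e. ker (p * _) = ker pi).  For k perfect of char p such a W is
   (uniquely) isomorphic to W_2(k), with pi the projection (a0,a1) |-> a0. *)
Definition is_W2 (k : fieldType) (p : nat) (W : comNzRingType)
  (pi : {rmorphism W -> k}) : Prop :=
  [/\ forall a : k, exists w : W, pi w = a,
      forall w : W, pi w = 0 <-> exists v : W, w = p%:R * v
    & forall w : W, p%:R * w = 0 <-> pi w = 0].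

Definition Ftilde (W : comNzRingType) (n p : nat) (sigma : W -> W)
  (g : {mpoly W[n]}) : {mpoly W[n]} :=
  mmap (fun c => (sigma c)%:MP) (fun i => 'X_i ^+ p) g.

(* P(g) is the unique element of R = k[x] with p * (lift of P(g)) = F(g) - g^p. *)
Definition isP (k : fieldType) (W : comNzRingType) (n p : nat)
  (pi : {rmorphism W -> k}) (sigma : W -> W) (g : {mpoly W[n]}) (h : {mpoly k[n]}) : Prop :=
  exists ht : {mpoly W[n]}, map_mpoly pi ht = h /\
    p%:R * ht = Ftilde p sigma g - g ^+ p.

Definition Pmap (k : fieldType) (W : comNzRingType) (n p : nat)
  (pi : {rmorphism W -> k}) (sigma : W -> W) (g : {mpoly W[n]}) : {mpoly k[n]} :=
  epsilon (inhabits 0) (isP p pi sigma g).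

(* Flatness of B = W[x]/(g_1..g_m) over W, via the equational criterion of
   flatness (Stacks 00HK): every relation sum_i a_i b_i = 0 in B (a_i in W,
   b_i in B) is trivial. Elements of B are represented by elements of W[x]. *)
Definition flat_quot (W : comNzRingType) (n m : nat) (g : 'I_m -> {mpoly W[n]}) : Prop :=
  forall (l : nat) (a : 'I_l -> W) (x : 'I_l -> {mpoly W[n]}),
    in_ideal g (\sum_(i < l) a i *: x i) ->
    exists (q : nat) (y : 'I_q -> {mpoly W[n]}) (b : 'I_l -> 'I_q -> W),
      (forall i, in_ideal g (x i - \sum_(j < q) b i j *: y j)) /\
      (forall j, \sum_(i < l) a i * b i j = 0).

(* Ring endomorphisms of B = W[x]/J (J = (g)), represented by ring
   endomorphisms Phi of W[x] with Phi(J) <= J, lying over sigma (on constants,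
   modulo J) and reducing modulo p to the p-th power map of
   A = B/pB = k[x]/(g mod p). *)
Definition frob_lift_endo (W : comNzRingType) (n m p : nat) (sigma : W -> W)
  (g : 'I_m -> {mpoly W[n]}) (Phi : {rmorphism {mpoly W[n]} -> {mpoly W[n]}}) : Prop :=
  [/\ forall b, in_ideal g b -> in_ideal g (Phi b),
      forall c : W, in_ideal g (Phi c%:MP - (sigma c)%:MP)
    & forall b, exists u, in_ideal g (Phi b - b ^+ p - p%:R * u)].

From HB Require Import structures.
From mathcomp Require Import all_boot all_order all_algebra.
From mathcomp Require Import mpoly ring.
From Stdlib Require Import ClassicalEpsilon.

(* A Frobenius lift Phi of B = W[x]/J, J = (ft), is determined modulo J by its
   values Phi(x_i) = x_i^p - p u_i on the variables: modulo J it agrees with the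
   twist G_u of the canonical lift sum_I a_I x^I |-> sum_I sigma(a_I) x^(pI), which
   sends x_i to x_i^p - p u_i instead of x_i^p.  Conversely G_u is a Frobenius lift
   of B as soon as it maps each ft_i into J.  Expanding, G_u(g) = F(g) - p y with
   y = sum_j (dg/dx_j)^p u_j mod p, so G_u(ft_i) = ft_i^p + p (P(ft_i) - y).
   Flatness of B over W makes p w lie in J exactly when w mod p lies in (f), so
   G_u(ft_i) is in J iff P(ft_i) - sum_j (df_i/dx_j)^p u_j is in (f): h = u mod p. *)

Set Implicit Arguments. Unset Strict Implicit. Unset Printing Implicit Defensive.
Import GRing.Theory.
Local Open Scope ring_scope.

Section Ideal.
Variables (T : comNzRingType) (m : nat) (g : 'I_m -> T).

Lemma in_ideal0 : in_ideal g 0.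
Proof. by exists (fun=> 0); rewrite big1 // => j _; rewrite mul0r. Qed.

Lemma in_idealD x y : in_ideal g x -> in_ideal g y -> in_ideal g (x + y).
Proof.
move=> [c ->] [d ->]; exists (fun j => c j + d j).
by rewrite -big_split; apply: eq_bigr => j _; rewrite mulrDl.
Qed.

Lemma in_idealMl a x : in_ideal g x -> in_ideal g (a * x).
Proof.
move=> [c ->]; exists (fun j => a * c j).
by rewrite mulr_sumr; apply: eq_bigr => j _; rewrite mulrA.
Qed.

Lemma in_idealMr a x : in_ideal g x -> in_ideal g (x * a).
Proof. by rewrite mulrC; apply: in_idealMl. Qed.

Lemma in_idealB x y : in_ideal g x -> in_ideal g y -> in_ideal g (x - y).
Proof. by move=> gx /(in_idealMl (-1)); rewrite mulN1r; apply: in_idealD. Qed.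

Lemma in_idealDl x y : in_ideal g x -> in_ideal g (x + y) <-> in_ideal g y.
Proof.
move=> gx; split=> [gxy | /(in_idealD gx)//].
by rewrite -(addKr x y) addrC; apply: in_idealB.
Qed.

Lemma in_ideal_sum l (F : 'I_l -> T) :
  (forall i, in_ideal g (F i)) -> in_ideal g (\sum_(i < l) F i).
Proof.
by move=> gF; elim/big_rec: _ => [|i x _]; [apply: in_ideal0 | apply: in_idealD].
Qed.

Lemma in_ideal_gen j : in_ideal g (g j).
Proof.
exists (fun i => (i == j)%:R); rewrite (bigD1 j) //= eqxx mul1r big1 ?addr0 //.
by move=> i /negbTE ->; rewrite mul0r.
Qed.

Lemma in_ideal_genX j e : (0 < e)%N -> in_ideal g (g j ^+ e).
Proof. by case: e => // e _; rewrite exprSr; apply/in_idealMl/in_ideal_gen. Qed.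

End Ideal.

Lemma in_ideal_rmorph (S T : comNzRingType) (phi : {rmorphism S -> T}) m
    (g : 'I_m -> S) (g' : 'I_m -> T) x :
  (forall j, phi (g j) = g' j) -> in_ideal g x -> in_ideal g' (phi x).
Proof.
move=> phi_g [c ->]; exists (phi \o c).
by rewrite rmorph_sum; apply: eq_bigr => j _; rewrite rmorphM phi_g.
Qed.

Lemma mpolyind_ring (R : comNzRingType) n (P : {mpoly R[n]} -> Prop) :
  (forall c, P c%:MP) -> (forall i, P 'X_i) ->
  (forall a b, P a -> P b -> P (a + b)) -> (forall a b, P a -> P b -> P (a * b)) ->
  forall g, P g.
Proof.
move=> PC PX PD PM; elim/mpolyind => [|c m g _ _ Pg]; first by rewrite -mpolyC0.
apply: (PD) => //; rewrite -mul_mpolyC; apply: (PM) => //.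
rewrite mpolyXE_id; elim/big_rec: _ => [|i x _ Px]; first by rewrite -mpolyC1.
apply: (PM) => //; elim: (m i) => [|e IHe]; first by rewrite expr0 -mpolyC1.
by rewrite exprS; apply: (PM).
Qed.

Lemma mderivXi (R : comNzRingType) n (i j : 'I_n) :
  ('X_i : {mpoly R[n]})^`M(j) = (i == j)%:R.
Proof.
rewrite mderivX mnm1E; case: eqP => [->|_]; last by rewrite scale0r.
have -> : (U_(j) - U_(j) = 0)%MM by apply/mnmP => l; rewrite mnmBE subnn mnmE.
by rewrite mpolyX0 scale1r.
Qed.

Section FrobeniusTwist.
Variables (k : fieldType) (p : nat) (p_char : p \in [pchar k]).
Variables (W : comNzRingType) (pi : {rmorphism W -> k}) (sigma : {rmorphism W -> W}).
Hypothesis sigma_frob : forall w, pi (sigma w) = pi w ^+ p.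
Variable n : nat.

Definition frob_twist (u : 'I_n -> {mpoly W[n]}) :
    {rmorphism {mpoly W[n]} -> {mpoly W[n]}} :=
  mmap (@mpolyC n W \o sigma) (fun i => 'X_i ^+ p - p%:R * u i).

Lemma frob_twistC u c : frob_twist u c%:MP = (sigma c)%:MP.
Proof. exact: mmapC. Qed.

Lemma frob_twistX u i : frob_twist u 'X_i = 'X_i ^+ p - p%:R * u i.
Proof. by rewrite /frob_twist /= mmapX mmap1U. Qed.

Lemma Ftilde_frob_twist0 g : Ftilde p sigma g = frob_twist (fun=> 0) g.
Proof.
apply: eq_bigr => m _; congr (_ * _).
by apply: mmap1_eq => i /=; rewrite mulr0 subr0.
Qed.

Let pchar_mpoly : p \in [pchar {mpoly k[n]}].
Proof. exact: (rmorph_pchar (@mpolyC n k)). Qed.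

Let expDp (a b : {mpoly k[n]}) : (a + b) ^+ p = a ^+ p + b ^+ p.
Proof. exact: (pFrobenius_autD_comm pchar_mpoly (mulrC a b)). Qed.

Lemma map_frob_twist u g : map_mpoly pi (frob_twist u g) = map_mpoly pi g ^+ p.
Proof.
elim/mpolyind_ring: g => [c|i|a b ha hb|a b ha hb].
- by rewrite frob_twistC !map_mpolyC -rmorphXn; congr _%:MP; apply: sigma_frob.
- rewrite frob_twistX rmorphB rmorphM rmorph_nat (pcharf0 pchar_mpoly) mul0r subr0.
  by rewrite rmorphXn /= map_mpolyX.
- by rewrite !rmorphD /= ha hb expDp.
- by rewrite !rmorphM /= ha hb exprMn.
Qed.

Lemma frob_twist_expansion u g : exists y,
  frob_twist u g = Ftilde p sigma g - p%:R * y /\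
  map_mpoly pi y = \sum_(j < n) ((map_mpoly pi g)^`M(j)) ^+ p * map_mpoly pi (u j).
Proof.
have zeroXp : (0 : {mpoly k[n]}) ^+ p = 0.
  by rewrite expr0n gtn_eqF ?prime_gt0 ?(pcharf_prime p_char).
rewrite Ftilde_frob_twist0; elim/mpolyind_ring: g => [c|i|a b|a b].
- exists 0; rewrite !frob_twistC mulr0 subr0 rmorph0 big1 // => j _.
  by rewrite map_mpolyC mderivC zeroXp mul0r.
- exists (u i); rewrite !frob_twistX mulr0 subr0; split => //.
  rewrite map_mpolyX (bigD1 i) //= mderivXi eqxx expr1n mul1r big1 ?addr0 //.
  by move=> j /negbTE ji; rewrite mderivXi eq_sym ji zeroXp mul0r.
- move=> [y1 [ea m1]] [y2 [eb m2]]; exists (y1 + y2); split.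
    by rewrite !rmorphD ea eb; ring.
  rewrite rmorphD /= m1 m2 -big_split /=; apply: eq_bigr => j _.
  by rewrite rmorphD mderivD expDp mulrDl.
- move=> [y1 [ea m1]] [y2 [eb m2]].
  exists (y1 * frob_twist u b + frob_twist (fun=> 0) a * y2); split.
    by rewrite !rmorphM ea eb; ring.
  rewrite rmorphD !rmorphM /= !map_frob_twist m1 m2 mulr_suml mulr_sumr -big_split /=.
  by apply: eq_bigr => j _; rewrite mderivM expDp !exprMn; ring.
Qed.

End FrobeniusTwist.

Section WittVectorsOfLength2.
Variables (k : fieldType) (p : nat) (W : comNzRingType) (pi : {rmorphism W -> k}).
Hypothesis W_W2 : is_W2 p pi.
Variable n : nat.

Lemma natr_p_sqr : p%:R * p%:R = 0 :> W.
Proof.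
have [_ kerE pmulE] := W_W2.
by apply/(pmulE p%:R)/(kerE p%:R); exists 1; rewrite mulr1.
Qed.

Lemma map_mpoly_fun_surj l (a : 'I_l -> {mpoly k[n]}) :
  exists b : 'I_l -> {mpoly W[n]}, forall j, map_mpoly pi (b j) = a j.
Proof.
suff /fin_all_exists : forall j, exists b, map_mpoly pi b = a j by [].
move=> j; have [surj _ _] := W_W2; elim/mpolyind_ring: (a j) => [c|i|x y|x y].
- by have [w <-] := surj c; exists w%:MP; rewrite map_mpolyC.
- by exists 'X_i; rewrite map_mpolyX.
- by move=> [x' <-] [y' <-]; exists (x' + y'); rewrite rmorphD.
- by move=> [x' <-] [y' <-]; exists (x' * y'); rewrite rmorphM.
Qed.

Lemma map_mpoly_eq0_pmul (q : {mpoly W[n]}) : map_mpoly pi q = 0 -> exists z, q = p%:R * z.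
Proof.
have [_ kerE _] := W_W2; move=> q0.
pose v (w : W) := epsilon (inhabits 0) (fun v => w = p%:R * v).
exists (\sum_(m <- msupp q) v q@_m *: 'X_[m]).
rewrite -mpolyC_nat mul_mpolyC scaler_sumr {1}(mpolyE q); apply: eq_bigr => m _.
rewrite scalerA; congr (_ *: _).
apply: (epsilon_spec (inhabits 0) (fun v => q@_m = p%:R * v)); apply/kerE.
by rewrite -mcoeff_map_mpoly q0 mcoeff0.
Qed.

End WittVectorsOfLength2.

Section FrobeniusLifts.
Variables (k : fieldType) (p : nat) (p_char : p \in [pchar k]).
Variables (W : comNzRingType) (pi : {rmorphism W -> k}) (W_W2 : is_W2 p pi).
Variables (sigma : {rmorphism W -> W}) (sigma_frob : forall w, pi (sigma w) = pi w ^+ p).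
Variables (n m : nat) (f : 'I_m -> {mpoly k[n]}) (ft : 'I_m -> {mpoly W[n]}).
Hypothesis ft_lift : forall i, map_mpoly pi (ft i) = f i.
Hypothesis B_flat : flat_quot ft.

Lemma PmapP (g : {mpoly W[n]}) : exists2 ht,
  map_mpoly pi ht = Pmap p pi sigma g & p%:R * ht = Ftilde p sigma g - g ^+ p.
Proof.
suff /(epsilon_spec (inhabits 0))[ht [? ?]] : exists h, isP p pi sigma g h by exists ht.
have [z zE] : exists z, Ftilde p sigma g - g ^+ p = p%:R * z.
  apply: (map_mpoly_eq0_pmul W_W2).
  by rewrite Ftilde_frob_twist0 rmorphB /= map_frob_twist // rmorphXn subrr.
by exists (map_mpoly pi z), z.
Qed.

Lemma in_ideal_pmul w : in_ideal ft (p%:R * w) <-> in_ideal f (map_mpoly pi w).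
Proof.
have [_ kerE pmulE] := W_W2; split=> [Jpw | [c wE]].
  have /B_flat[q [y [b [wy pb]]]] : in_ideal ft (\sum_(i < 1) p%:R *: w).
    by rewrite big_ord1 scaler_nat -mulr_natl.
  have pib j : pi (b ord0 j) = 0 by apply/pmulE; have := pb j; rewrite big_ord1.
  have := in_ideal_rmorph ft_lift (wy ord0); rewrite rmorphB rmorph_sum big1 ?subr0 //.
  by move=> j _ /=; rewrite map_mpolyZ pib scale0r.
have [c' c'E] := map_mpoly_fun_surj W_W2 c.
have [z wz] : exists z, w - \sum_(j < m) c' j * ft j = p%:R * z.
  apply: (map_mpoly_eq0_pmul W_W2); apply/eqP; rewrite rmorphB rmorph_sum /= wE subr_eq0.
  by apply/eqP/eq_bigr => j _; rewrite rmorphM /= c'E ft_lift.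
rewrite -(subrK (\sum_(j < m) c' j * ft j) w) wz mulrDr mulrA.
rewrite -mpolyC_nat -mpolyCM (natr_p_sqr W_W2) mpolyC0 mul0r add0r.
rewrite mulr_sumr; apply: in_ideal_sum => j.
by rewrite mulrA; apply/in_idealMl/in_ideal_gen.
Qed.

Lemma frob_twist_in_ideal u i :
  in_ideal ft (frob_twist p sigma u (ft i)) <->
  in_ideal f (Pmap p pi sigma (ft i)
              - \sum_(j < n) ((f i)^`M(j)) ^+ p * map_mpoly pi (u j)).
Proof.
have [y [yE ypi]] := frob_twist_expansion p_char sigma_frob u (ft i).
have [ht htpi htE] := PmapP (ft i).
have -> : frob_twist p sigma u (ft i) = ft i ^+ p + p%:R * (ht - y).
  by rewrite yE mulrBr htE; ring.
rewrite in_idealDl; last exact/in_ideal_genX/prime_gt0/(pcharf_prime p_char).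
by rewrite in_ideal_pmul rmorphB /= htpi ypi ft_lift.
Qed.

Lemma frob_lift_endo_twist (Phi : {rmorphism {mpoly W[n]} -> {mpoly W[n]}}) :
  frob_lift_endo p sigma ft Phi ->
  exists u, forall g, in_ideal ft (Phi g - frob_twist p sigma u g).
Proof.
case=> _ PhiC Phi_frob.
have /fin_all_exists[v vE] : forall i : 'I_n,
    exists v, in_ideal ft (Phi 'X_i - 'X_i ^+ p - p%:R * v) by move=> i; apply: Phi_frob.
exists (fun i => - v i); set G := frob_twist _ _ _.
elim/mpolyind_ring => [c|i|a b Ja Jb|a b Ja Jb].
- by rewrite /G frob_twistC; apply: PhiC.
- by rewrite /G frob_twistX mulrN opprK opprD addrA.
- by rewrite !rmorphD opprD addrACA; apply: in_idealD.
- have -> : Phi (a * b) - G (a * b) = Phi a * (Phi b - G b) + (Phi a - G a) * G b.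
    by rewrite !rmorphM; ring.
  by apply: in_idealD; [apply: in_idealMl | apply: in_idealMr].
Qed.

Lemma frob_twist_frob_lift_endo u :
  (forall i, in_ideal ft (frob_twist p sigma u (ft i))) ->
  frob_lift_endo p sigma ft (frob_twist p sigma u).
Proof.
move=> Jft; split.
- move=> _ [c ->]; rewrite rmorph_sum; apply: in_ideal_sum => j.
  by rewrite rmorphM; apply: in_idealMl.
- by move=> c; rewrite frob_twistC subrr; apply: in_ideal0.
- move=> b; have [z zE] : exists z, frob_twist p sigma u b - b ^+ p = p%:R * z.
    apply: (map_mpoly_eq0_pmul W_W2).
    by rewrite rmorphB /= map_frob_twist // rmorphXn subrr.
  by exists z; rewrite zE subrr; apply: in_ideal0.
Qed.

End FrobeniusLifts.

Unset Implicit Arguments. Set Strict Implicit.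

Theorem lemma4p5 (k : fieldType) (p : nat)
  (p_prime : prime p) (p_char : p \in [pchar k])
  (k_perfect : forall a : k, exists b : k, b ^+ p = a)
  (W : comNzRingType) (pi : {rmorphism W -> k}) (W_W2 : is_W2 p pi)
  (sigma : {rmorphism W -> W}) (sigma_frob : forall w : W, pi (sigma w) = pi w ^+ p)
  (n m : nat) (f : 'I_m -> {mpoly k[n]}) (ft : 'I_m -> {mpoly W[n]})
  (ft_lift : forall i, map_mpoly pi (ft i) = f i)
  (B_flat : flat_quot ft) :
  (exists Phi : {rmorphism {mpoly W[n]} -> {mpoly W[n]}}, frob_lift_endo p sigma ft Phi)
  <->
  (exists h : 'I_n -> {mpoly k[n]}, forall i : 'I_m,
     in_ideal f (Pmap p pi sigma (ft i)
                 - \sum_(j < n) ((f i)^`M(j)) ^+ p * h j)).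
Proof.
(* [p_prime] follows from [p_char]; [k_perfect] is only needed to construct W and
   sigma, which are given here. *)
have twist_in_ideal := frob_twist_in_ideal p_char W_W2 sigma_frob ft_lift B_flat.
split=> [[Phi Phi_lift] | [h hP]].
- have [u PhiE] := frob_lift_endo_twist Phi_lift.
  exists (fun j => map_mpoly pi (u j)) => i; apply/twist_in_ideal.
  have PhiJ : in_ideal ft (Phi (ft i)) by case: Phi_lift => J _ _; apply/J/in_ideal_gen.
  rewrite -(subKr (Phi (ft i)) (frob_twist p sigma u (ft i))).
  exact: in_idealB PhiJ (PhiE _).
- have [u uE] := map_mpoly_fun_surj W_W2 h.
  exists (frob_twist p sigma u).
  apply: (frob_twist_frob_lift_endo p_char W_W2 sigma_frob) => i.
  by apply/twist_in_ideal; under eq_bigr do rewrite uE.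
Qed.
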